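(* Let $\alpha_1,\dots,\alpha_K\in\mathbb R^d\setminus\{0\}$. (1) For every $\eta\in\mathbb R^d\setminus\{0\}$ there is a (possibly empty) subset $\{\alpha_{k_1},\dots,\alpha_{k_m}\}\subseteq\{\alpha_1,\dots,\alpha_K\}$ with $\mathcal H_\eta=\mathrm{span}\{\alpha_{k_1},\dots,\alpha_{k_m}\}$ (with $\mathcal H_\eta=\{0\}$ if empty) such that (i) $P_{\mathcal H_\eta}\eta=\sum_{p=1}^m\gamma_{k_p}\alpha_{k_p}$ for some $\gamma_{k_1},\dots,\gamma_{k_m}\ge0$; (ii) $\alpha_k^{T}P_{\mathcal H_\eta^\perp}\eta<0$ for every $k\notin\{k_1,\dots,k_m\}$; (iii) $P_{\mathcal H_\eta^\perp}\eta$ is uniquely determined by $\eta$ (independent of the choice of such a subset) and depends continuously on $\eta$; it is called the canonical projection of $\eta$ with respect to $\{\alpha_1,\dots,\alpha_K\}$. (2) Let $\omega_1,\dots,\omega_K>0$ and $\eta_n\in\mathbb R^d$ with $\eta_n/n\to\eta\ne0$. Let $f_n(\theta)=-\sum_{k=1}^K\omega_k\exp(\alpha_k^{T}\theta)+\eta_n^{T}\theta-\tfrac12\theta^{T}\theta$ with unique maximizer $\theta_n$. Then $\theta_n/n\to P_{\mathcal H_\eta^\perp}\eta$ and $f_n(\theta_n)/n^2\to\tfrac12\|P_{\mathcal H_\eta^\perp}\eta\|^2$.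
   Context: $P_{\mathcal H}$ denotes orthogonal projection onto a subspace $\mathcal H$ of $\mathbb R^d$ and $\mathcal H^\perp$ its orthogonal complement. *)

(* MathComp + MathComp-Analysis, over an abstract R : realType.
   Vectors of R^d are row vectors 'rV[R]_d; a subspace H of R^d is
   represented as the row space of a matrix. *)
From HB Require Import structures.
From mathcomp Require Import all_boot all_order all_algebra.
From mathcomp Require Import all_classical all_reals all_analysis.
Set Implicit Arguments. Unset Strict Implicit. Unset Printing Implicit Defensive.
Import Order.TTheory GRing.Theory Num.Theory.
Import numFieldNormedType.Exports.
Local Open Scope ring_scope.

Definition dotv (R : realType) (d : nat) (u v : 'rV[R]_d) : R :=
  \sum_(i < d) u 0 i * v 0 i.

(* Orthogonal projection P_H onto H = row space of A.  With B := row_base A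
   (a basis of H as rows, full row rank), P_H v = v B^T (B B^T)^{-1} B.
   If H = {0}, B is empty and P_H v = 0. *)
Definition orthproj (R : realType) (m d : nat) (A : 'M[R]_(m, d))
    (v : 'rV[R]_d) : 'rV[R]_d :=
  let B := row_base A in v *m B^T *m invmx (B *m B^T) *m B.

(* H_S = span {alpha_k | k in S}: row space of the matrix whose k-th row is
   alpha_k if k \in S and 0 otherwise. *)
Definition spanmx (R : realType) (d K : nat) (alpha : 'I_K -> 'rV[R]_d)
    (S : {set 'I_K}) : 'M[R]_(K, d) :=
  \matrix_(k < K, j < d) (if k \in S then alpha k 0 j else 0).

(* H_S^perp = { u | u alpha_k^T = 0 for all k in S } = row space of kermx A^T. *)
Definition perpmx (R : realType) (d K : nat) (alpha : 'I_K -> 'rV[R]_d)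
    (S : {set 'I_K}) : 'M[R]_d :=
  kermx (spanmx alpha S)^T.

Definition perpproj (R : realType) (d K : nat) (alpha : 'I_K -> 'rV[R]_d)
    (S : {set 'I_K}) (eta : 'rV[R]_d) : 'rV[R]_d :=
  orthproj (perpmx alpha S) eta.

Definition admissible (R : realType) (d K : nat) (alpha : 'I_K -> 'rV[R]_d)
    (eta : 'rV[R]_d) (S : {set 'I_K}) : Prop :=
  (exists gamma : 'I_K -> R,
      (forall k, k \in S -> 0 <= gamma k) /\
      orthproj (spanmx alpha S) eta = \sum_(k in S) gamma k *: alpha k)
  /\ (forall k, k \notin S -> dotv (alpha k) (perpproj alpha S eta) < 0).

Definition fobj (R : realType) (d K : nat) (alpha : 'I_K -> 'rV[R]_d)
    (omega : 'I_K -> R) (etan : 'rV[R]_d) (theta : 'rV[R]_d) : R :=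
  - (\sum_(k < K) omega k * expR (dotv (alpha k) theta))
  + dotv etan theta - 2^-1 * dotv theta theta.

From HB Require Import structures.
From mathcomp Require Import all_boot all_order all_algebra.
From mathcomp Require Import all_classical all_reals all_analysis.
From mathcomp Require Import ring lra.
Import Order.TTheory GRing.Theory Num.Theory.
Import numFieldNormedType.Exports.
Local Open Scope ring_scope.
Set Implicit Arguments. Unset Strict Implicit.

(* The canonical projection of [eta] is its Euclidean projection on the polar
   cone C = {phi | alpha_k . phi <= 0 for all k}: the admissibility conditions
   (i)-(ii) are the Karush-Kuhn-Tucker conditions of this projection, the active
   constraints spanning H_eta.  The variational inequality of the projection gives
   uniqueness and Lipschitz continuity; existence follows by induction on the
   number of constraints.
   For the asymptotics, f_n(n phi) / n^2 is close to eta . phi - |phi|^2 / 2 when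
   phi lies in C, because the exponentials then stay bounded, while outside C they
   beat any linear gain.  Comparing f_n(theta_n) with f_n(n P eta) squeezes
   theta_n / n onto P eta and f_n(theta_n) / n^2 onto |P eta|^2 / 2. *)

Section Dotv.
Variables (R : realType) (d : nat).
Implicit Types u v w : 'rV[R]_d.

Lemma dotvC u v : dotv u v = dotv v u.
Proof. by apply: eq_bigr => i _; rewrite mulrC. Qed.

Lemma dotvDl u v w : dotv (u + v) w = dotv u w + dotv v w.
Proof. by rewrite /dotv -big_split; apply: eq_bigr => i _; rewrite !mxE mulrDl. Qed.

Lemma dotvDr u v w : dotv w (u + v) = dotv w u + dotv w v.
Proof. by rewrite dotvC dotvDl !(dotvC w). Qed.

Lemma dotvZl a u v : dotv (a *: u) v = a * dotv u v.
Proof. by rewrite /dotv mulr_sumr; apply: eq_bigr => i _; rewrite !mxE mulrA. Qed.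

Lemma dotvZr a u v : dotv v (a *: u) = a * dotv v u.
Proof. by rewrite dotvC dotvZl dotvC. Qed.

Lemma dotvNl u v : dotv (- u) v = - dotv u v.
Proof. by rewrite -scaleN1r dotvZl mulN1r. Qed.

Lemma dotvNr u v : dotv v (- u) = - dotv v u.
Proof. by rewrite dotvC dotvNl dotvC. Qed.

Lemma dotvBl u v w : dotv (u - v) w = dotv u w - dotv v w.
Proof. by rewrite dotvDl dotvNl. Qed.

Lemma dotvBr u v w : dotv w (u - v) = dotv w u - dotv w v.
Proof. by rewrite dotvDr dotvNr. Qed.

Lemma dotv0l v : dotv 0 v = 0.
Proof. by rewrite /dotv big1 // => i _; rewrite mxE mul0r. Qed.

Lemma dotv_suml (I : finType) (P : pred I) (F : I -> 'rV[R]_d) v :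
  dotv (\sum_(i | P i) F i) v = \sum_(i | P i) dotv (F i) v.
Proof. by elim/big_rec2: _ => [|i x y _ <-]; rewrite ?dotv0l ?dotvDl. Qed.

Lemma dotvv_ge0 v : 0 <= dotv v v.
Proof. by apply: sumr_ge0 => i _; rewrite -expr2 sqr_ge0. Qed.

Lemma dotvv_eq0 v : dotv v v = 0 -> v = 0.
Proof.
move=> /eqP; rewrite psumr_eq0 => [/allP v0|i _]; last by rewrite -expr2 sqr_ge0.
apply/rowP => i; rewrite mxE.
by have /v0 := mem_index_enum i; rewrite /= mulf_eq0 orbb => /eqP.
Qed.

Lemma dotvE u v : dotv u v = (u *m v^T) 0 0.
Proof. by rewrite !mxE; apply: eq_bigr => i _; rewrite !mxE. Qed.

(* [`|v|] is the sup norm of the entries of [v]. *)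
Lemma sqr_norm_le_dotv v : `|v| ^+ 2 <= dotv v v.
Proof.
have -> : `|v| = mx_norm v by [].
have [/mx_norm_eq0 ->|/mx_norm_neq0 [[i j] ->]] := eqVneq (mx_norm v) 0.
  by rewrite mx_norm0 expr0n dotvv_ge0.
rewrite /dotv (bigD1 j) //= (ord1 i) real_normK ?num_real // lerDl.
by apply: sumr_ge0 => k _; rewrite -expr2 sqr_ge0.
Qed.

Lemma norm_dotv_le u v : `|dotv u v| <= d%:R * (`|u| * `|v|).
Proof.
have entry_le w i : `|w 0 i| <= `|w|.
  have -> : `|w| = mx_norm w by [].
  by rewrite mx_normrE (bigD1 (0, i)) //= le_max lexx.
have -> : d%:R * (`|u| * `|v|) = \sum_(i < d) `|u| * `|v|.
  by rewrite sumr_const card_ord mulr_natl.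
apply: le_trans (ler_norm_sum _ _ _) _; apply: ler_sum => i _.
by rewrite normrM ler_pM ?entry_le.
Qed.

End Dotv.

Section OrthProj.
Variables (R : realType) (d : nat).

Lemma submx_orth_eq0 m (A : 'M[R]_(m, d)) (w : 'rV_d) :
  (w <= A)%MS -> w *m A^T = 0 -> w = 0.
Proof.
move=> /submxP [D ->] wA; apply: dotvv_eq0.
by rewrite dotvE trmx_mul mulmxA wA mul0mx mxE.
Qed.

Lemma row_free_mulmx_tr_unit m (B : 'M[R]_(m, d)) :
  row_free B -> B *m B^T \in unitmx.
Proof.
move=> freeB; rewrite -row_free_unit; apply: inj_row_free => v vBBT.
apply/(row_free_inj freeB); rewrite mul0mx.
by apply: (@submx_orth_eq0 _ B); rewrite ?submxMl // -mulmxA.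
Qed.

Lemma orthproj_sub m (A : 'M[R]_(m, d)) v : (orthproj A v <= A)%MS.
Proof. by apply: submx_trans (submxMl _ _) _; rewrite eq_row_base. Qed.

Lemma orthproj_orth m (A : 'M[R]_(m, d)) v : (v - orthproj A v) *m A^T = 0.
Proof.
have /submxP [D defA] : (A <= row_base A)%MS by rewrite eq_row_base.
rewrite [in A^T]defA trmx_mul mulmxA /orthproj.
have := row_free_mulmx_tr_unit (row_base_free A); move: (row_base A) => B BBT.
by rewrite mulmxBl -!mulmxA mulVmx // mulmx1 subrr mul0mx.
Qed.

Lemma orthproj_unique m (A : 'M[R]_(m, d)) v h :
  (h <= A)%MS -> (v - h) *m A^T = 0 -> orthproj A v = h.
Proof.
move=> hA vhA; apply/eqP; rewrite -subr_eq0; apply/eqP/(@submx_orth_eq0 _ A).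
  by rewrite addmx_sub ?eqmx_opp ?orthproj_sub.
have -> : orthproj A v - h = (v - h) - (v - orthproj A v).
  by rewrite [RHS]addrC opprB addrA subrK.
by rewrite mulmxBl vhA orthproj_orth subrr.
Qed.

End OrthProj.

Section Span.
Variables (R : realType) (d K : nat) (alpha : 'I_K -> 'rV[R]_d).
Implicit Types (S : {set 'I_K}) (u eta : 'rV[R]_d).

Lemma mulmx_spanmx_tr_eq0 S u :
  (u *m (spanmx alpha S)^T = 0) <-> (forall k, k \in S -> dotv (alpha k) u = 0).
Proof.
have entry k : (u *m (spanmx alpha S)^T) 0 k = if k \in S then dotv (alpha k) u else 0.
  rewrite !mxE; case: ifP => kS.
    by apply: eq_bigr => j _; rewrite !mxE kS mulrC.
  by rewrite big1 // => j _; rewrite !mxE kS mulr0.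
split=> [uS k kS|uS]; first by have := entry k; rewrite uS kS mxE.
by apply/rowP => k; rewrite entry mxE; case: ifP => // /uS.
Qed.

Lemma sumZ_spanmx S (g : 'I_K -> R) :
  \sum_(k in S) g k *: alpha k = (\row_k g k) *m spanmx alpha S.
Proof.
apply/rowP => j; rewrite !mxE summxE big_mkcond /=.
by apply: eq_bigr => k _; rewrite !mxE; case: ifP; rewrite ?mulr0.
Qed.

Lemma perpprojE S eta : perpproj alpha S eta = eta - orthproj (spanmx alpha S) eta.
Proof.
apply: orthproj_unique; first by apply/sub_kermxP; apply: orthproj_orth.
have /submxP [D ->] := orthproj_sub (spanmx alpha S) eta.
rewrite opprB addrC subrK -mulmxA.
by rewrite -{1}(trmxK (spanmx alpha S)) -trmx_mul mulmx_ker trmx0 mulmx0.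
Qed.

Lemma dotv_perpproj S eta k : k \in S -> dotv (alpha k) (perpproj alpha S eta) = 0.
Proof. by apply: (mulmx_spanmx_tr_eq0 _ _).1; rewrite perpprojE orthproj_orth. Qed.

End Span.

Section PolarCone.
Variables (R : realType) (d K : nat).
Implicit Types (alpha : 'I_K -> 'rV[R]_d) (eta phi : 'rV[R]_d).
Implicit Types (S T : {set 'I_K}) (g : 'I_K -> R).

Definition residual alpha eta S g := eta - \sum_(k in S) g k *: alpha k.

(* Karush-Kuhn-Tucker conditions exhibiting [residual alpha eta S g] as the
   projection of [eta] on the polar cone [{phi | dotv (alpha k) phi <= 0, k in T}],
   with active constraints [S] and multipliers [g]. *)
Definition polar_kkt alpha T eta S g : Prop :=
  [/\ S \subset T, (forall k, k \in S -> 0 <= g k),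
      (forall k, k \in S -> dotv (alpha k) (residual alpha eta S g) = 0) &
      (forall k, k \in T -> k \notin S -> dotv (alpha k) (residual alpha eta S g) < 0)].

Lemma subr_residual alpha eta S g :
  eta - residual alpha eta S g = \sum_(k in S) g k *: alpha k.
Proof. by rewrite /residual opprB addrC subrK. Qed.

Lemma dotv_sumZl alpha S g phi :
  dotv (\sum_(k in S) g k *: alpha k) phi = \sum_(k in S) g k * dotv (alpha k) phi.
Proof. by rewrite dotv_suml; apply: eq_bigr => k _; rewrite dotvZl. Qed.

Lemma polar_kkt_le0 alpha T eta S g : polar_kkt alpha T eta S g ->
  forall k, k \in T -> dotv (alpha k) (residual alpha eta S g) <= 0.
Proof.
case=> _ _ act inact k kT.
by have [/act ->|kS] := boolP (k \in S); last by rewrite ltW ?inact.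
Qed.

Lemma polar_kkt_variational alpha T eta S g phi : polar_kkt alpha T eta S g ->
  (forall k, k \in T -> dotv (alpha k) phi <= 0) ->
  dotv (eta - residual alpha eta S g) (phi - residual alpha eta S g) <= 0.
Proof.
move=> [sST g_ge0 act _] phiT; rewrite subr_residual dotv_sumZl.
apply: sumr_le0 => k kS; rewrite dotvBr act // subr0.
by apply: mulr_ge0_le0; [exact: g_ge0 | apply/phiT/(fintype.subsetP sST)].
Qed.

Lemma polar_kkt_acute alpha T eta S g phi : polar_kkt alpha T eta S g ->
  (forall k, k \in T -> dotv (alpha k) phi <= 0) ->
  0 <= dotv (eta - phi) (residual alpha eta S g - phi).
Proof.
move=> kkt /(polar_kkt_variational kkt).
have := dotvv_ge0 (residual alpha eta S g - phi).
move: (residual alpha eta S g) => r.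
rewrite !(dotvBl, dotvBr) ?(dotvC phi r) ?(dotvC r eta) ?(dotvC phi eta); lra.
Qed.

Lemma polar_kkt_nonexpansive alpha T x y S g S' g' :
  polar_kkt alpha T x S g -> polar_kkt alpha T y S' g' ->
  dotv (residual alpha x S g - residual alpha y S' g')
       (residual alpha x S g - residual alpha y S' g') <= dotv (x - y) (x - y).
Proof.
move=> kkt kkt'.
have vx := polar_kkt_variational kkt (polar_kkt_le0 kkt').
have vy := polar_kkt_variational kkt' (polar_kkt_le0 kkt).
have := dotvv_ge0 ((x - y) - (residual alpha x S g - residual alpha y S' g')).
move: vx vy; move: (residual alpha x S g) (residual alpha y S' g') => p q.
rewrite !(dotvDl, dotvDr, dotvBl, dotvBr, dotvNl, dotvNr, opprK).
rewrite ?(dotvC y x) ?(dotvC p x) ?(dotvC q x) ?(dotvC p y) ?(dotvC q y) ?(dotvC q p).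
lra.
Qed.

Lemma polar_kkt_residual_unique alpha T eta S g S' g' :
  polar_kkt alpha T eta S g -> polar_kkt alpha T eta S' g' ->
  residual alpha eta S g = residual alpha eta S' g'.
Proof.
move=> kkt kkt'; apply/eqP; rewrite -subr_eq0; apply/eqP/dotvv_eq0/le_anti.
by have := polar_kkt_nonexpansive kkt kkt'; rewrite subrr dotv0l => ->; rewrite dotvv_ge0.
Qed.

Lemma polar_kkt_set0 alpha eta : polar_kkt alpha finset.set0 eta finset.set0 (fun=> 0).
Proof. by split; rewrite ?finset.sub0set // => k; rewrite finset.in_set0. Qed.

Lemma residual_setU1 alpha eta S g j mu : j \notin S ->
  residual alpha eta (j |: S) (fun k => if k == j then mu else g k) =
  residual alpha eta S g - mu *: alpha j.
Proof.
move=> jS; rewrite /residual big_setU1 //= eqxx.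
rewrite (eq_bigr (fun k => g k *: alpha k)) => [|k kS].
  by rewrite opprD addrA addrAC.
by rewrite ifN //; apply: contraNneq jS => <-.
Qed.

Lemma polar_kkt_setU1_le0 alpha T eta S g j : j \notin T ->
  polar_kkt alpha T eta S g -> dotv (alpha j) (residual alpha eta S g) <= 0 ->
  exists S' g', polar_kkt alpha (j |: T) eta S' g'.
Proof.
move=> jT [sST g_ge0 act inact].
have jS : j \notin S by apply: contra jT; apply: (fintype.subsetP sST).
have inT k : k \in j |: T -> k != j -> k \in T by case/setU1P => [->|//]; rewrite eqxx.
rewrite le_eqVlt => /orP [/eqP aj0|aj_lt0].
  exists (j |: S), (fun k => if k == j then 0 else g k).
  rewrite /polar_kkt residual_setU1 // scale0r subr0; split.
  - by rewrite finset.setUS.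
  - by move=> k /setU1P [->|kS]; rewrite ?eqxx //; case: eqP => // _; apply: g_ge0.
  - by move=> k /setU1P [->|/act].
  - by move=> k kT; rewrite in_setU1 negb_or => /andP [kj]; apply: inact; apply: inT.
exists S, g; split => //; first by rewrite (fintype.subset_trans sST) ?finset.subsetUr.
by move=> k kT kS; have [->//|kj] := eqVneq k j; apply: inact (inT _ kT kj) kS.
Qed.

Definition orthcomp (a x : 'rV[R]_d) := x - (dotv a x / dotv a a) *: a.

Lemma dotv_orthcomp a x : dotv a a != 0 -> dotv a (orthcomp a x) = 0.
Proof. by move=> a0; rewrite dotvBr dotvZr mulfVK // subrr. Qed.

Lemma residual_orthcomp a alpha eta S g :
  residual (fun k => orthcomp a (alpha k)) (orthcomp a eta) S g =
  orthcomp a (residual alpha eta S g).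
Proof.
rewrite /residual {3}/orthcomp dotvBr (dotvC a (\sum_(k in S) _)) dotv_sumZl mulrBl.
have -> : \sum_(k in S) g k *: orthcomp a (alpha k) =
    \sum_(k in S) g k *: alpha k - (\sum_(k in S) g k * dotv (alpha k) a / dotv a a) *: a.
  rewrite scaler_suml -sumrB; apply: eq_bigr => k _.
  by rewrite scalerBr scalerA (dotvC a (alpha k)) mulrA.
by rewrite /orthcomp scalerBl -mulr_suml; apply/rowP => i; rewrite !mxE; ring.
Qed.

(* Adding a constraint [j] violated by the current projection: project the
   problem on the hyperplane orthogonal to [alpha j], where the constraint becomes
   active, and read off its multiplier. *)
Lemma polar_kkt_setU1_gt0 alpha T eta S0 g0 S g j : j \notin T ->
  polar_kkt alpha T eta S0 g0 -> 0 < dotv (alpha j) (residual alpha eta S0 g0) ->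
  polar_kkt (fun k => orthcomp (alpha j) (alpha k)) T (orthcomp (alpha j) eta) S g ->
  exists S' g', polar_kkt alpha (j |: T) eta S' g'.
Proof.
move=> jT kkt0 aj_gt0 kkt; have [sST g_ge0 act inact] := kkt.
set a := alpha j in aj_gt0 kkt act inact *.
set th0 := residual alpha eta S0 g0 in aj_gt0.
set th := orthcomp a (residual alpha eta S g).
set mu := dotv a (residual alpha eta S g) / dotv a a.
set g' := fun k => if k == j then mu else g k.
have jS : j \notin S by apply: contra jT; apply: (fintype.subsetP sST).
have aa0 : dotv a a != 0.
  by apply: contraTneq aj_gt0 => /dotvv_eq0 a0; rewrite a0 dotv0l ltxx.
have res' : residual alpha eta (j |: S) g' = th by rewrite residual_setU1.
have thE : th = residual (fun k => orthcomp a (alpha k)) (orthcomp a eta) S g.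
  by rewrite residual_orthcomp.
have a_th : dotv a th = 0 by apply: dotv_orthcomp.
have alpha_th k : dotv (alpha k) th = dotv (orthcomp a (alpha k)) th.
  by rewrite [RHS]dotvBl dotvZl a_th mulr0 subr0.
have act' k : k \in j |: S -> dotv (alpha k) th = 0.
  by case/setU1P => [->|kS]; [apply: a_th | rewrite alpha_th thE; apply: act].
(* [th] lies in the cone, hence [(eta - th) . th0 >= 0]; as [th0] lies in the cone
   too, only the [alpha j] term of [eta - th] can make this product positive. *)
have mu_ge0 : 0 <= mu.
  have th_polar k : k \in T -> dotv (alpha k) th <= 0.
    by move=> kT; rewrite alpha_th thE (polar_kkt_le0 kkt).
  have := polar_kkt_acute kkt0 th_polar; rewrite -/th0.
  have orth : \sum_(k in j |: S) g' k * dotv (alpha k) th = 0.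
    by apply: big1 => k /act' ->; rewrite mulr0.
  rewrite dotvBr -{1 2}res' subr_residual !dotv_sumZl orth subr0 big_setU1 //= {1}/g' eqxx.
  have : \sum_(k in S) g' k * dotv (alpha k) th0 <= 0.
    apply: sumr_le0 => k kS; rewrite /g' ifN; last by apply: contraNneq jS => <-.
    apply: mulr_ge0_le0; first exact: g_ge0.
    by apply: (polar_kkt_le0 kkt0); apply: (fintype.subsetP sST).
  rewrite -/a => sum_le0 h; rewrite -(pmulr_lge0 _ aj_gt0); lra.
exists (j |: S), g'; rewrite /polar_kkt res'; split.
- by rewrite finset.setUS.
- by move=> k /setU1P [->|kS]; rewrite /g' ?eqxx //; case: eqP => // _; apply: g_ge0.
- exact: act'.
- move=> k /setU1P [->|kT]; first by rewrite setU11.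
  by rewrite in_setU1 negb_or => /andP [_ kS]; rewrite alpha_th thE; apply: inact.
Qed.

Lemma polar_kkt_exists alpha T eta : exists S g, polar_kkt alpha T eta S g.
Proof.
move: {2}#|T| (leqnn #|T|) => n; elim: n T alpha eta => [|n IH] T alpha eta.
  by rewrite leqn0 cards_eq0 => /eqP ->; exists finset.set0, (fun=> 0); apply: polar_kkt_set0.
have [-> _|[j jT] sizeT] := finset.set_0Vmem T.
  by exists finset.set0, (fun=> 0); apply: polar_kkt_set0.
rewrite -(finset.setD1K jT).
have jT' : j \notin T :\ j by rewrite setD11.
have sizeT' : (#|T :\ j| <= n)%N by move: sizeT; rewrite (cardsD1 j T) jT.
have [S0 [g0 kkt0]] := IH _ alpha eta sizeT'.
have [aj_le0|aj_gt0] := lerP (dotv (alpha j) (residual alpha eta S0 g0)) 0.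
  exact: polar_kkt_setU1_le0 kkt0 aj_le0.
have [S [g kkt]] := IH _ (fun k => orthcomp (alpha j) (alpha k)) (orthcomp (alpha j) eta) sizeT'.
exact: polar_kkt_setU1_gt0 jT' kkt0 aj_gt0 kkt.
Qed.

End PolarCone.

Section CanonicalProjection.
Variables (R : realType) (d K : nat) (alpha : 'I_K -> 'rV[R]_d).

Lemma polar_kkt_setT_exists eta :
  exists p : {set 'I_K} * ('I_K -> R), polar_kkt alpha [set: 'I_K] eta p.1 p.2.
Proof. by have [S [g kkt]] := polar_kkt_exists alpha [set: 'I_K] eta; exists (S, g). Qed.

Definition canproj_cert eta := projT1 (cid (polar_kkt_setT_exists eta)).

Lemma canproj_certP eta :
  polar_kkt alpha [set: 'I_K] eta (canproj_cert eta).1 (canproj_cert eta).2.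
Proof. exact: projT2 (cid (polar_kkt_setT_exists eta)). Qed.

Definition canproj eta := residual alpha eta (canproj_cert eta).1 (canproj_cert eta).2.

Lemma polar_kkt_admissible eta S g :
  polar_kkt alpha [set: 'I_K] eta S g -> admissible alpha eta S.
Proof.
move=> [_ g_ge0 act inact].
have proj : orthproj (spanmx alpha S) eta = \sum_(k in S) g k *: alpha k.
  apply: orthproj_unique; first by rewrite sumZ_spanmx submxMl.
  exact: (mulmx_spanmx_tr_eq0 _ _ _).2.
split; first by exists g.
by move=> k kS; rewrite perpprojE proj; apply: inact; rewrite ?finset.in_setT.
Qed.

Lemma admissible_perpproj eta S :
  admissible alpha eta S -> perpproj alpha S eta = canproj eta.
Proof.
move=> [[g [g_ge0 proj]] inact].
have res : perpproj alpha S eta = residual alpha eta S g by rewrite perpprojE proj.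
rewrite res; apply: polar_kkt_residual_unique (canproj_certP eta); split.
- exact: finset.subsetT.
- exact: g_ge0.
- by move=> k kS; rewrite -res dotv_perpproj.
- by move=> k _ kS; rewrite -res; apply: inact.
Qed.

Lemma canproj_lipschitz x y : `|canproj x - canproj y| <= d.+1%:R * `|x - y|.
Proof.
rewrite -ler_sqr ?nnegrE ?mulr_ge0 //.
apply: le_trans (sqr_norm_le_dotv _) _.
apply: le_trans (polar_kkt_nonexpansive (canproj_certP x) (canproj_certP y)) _.
apply: le_trans (ler_norm _) _; apply: le_trans (norm_dotv_le _ _) _.
rewrite -expr2 exprMn ler_wpM2r ?exprn_ge0 // expr2 -natrM ler_nat.
by rewrite (leq_trans (leqnSn d)) // leq_pmulr.
Qed.

Lemma canproj_continuous eta : {for eta, continuous canproj}.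
Proof.
apply/(@cvgrPdist_le _ _ _ (nbhs eta) (nbhs_filter eta)) => e e_gt0.
have de_gt0 : 0 < e / d.+1%:R by rewrite divr_gt0.
near=> x.
have : ball eta (e / d.+1%:R) x by near: x; apply: nbhsx_ballx.
rewrite -ball_normE /= => /ltW dist_le.
apply: le_trans (canproj_lipschitz _ _) _.
by rewrite mulrC -ler_pdivlMr.
Unshelve. all: by end_near.
Qed.

End CanonicalProjection.

Lemma linear_sub_expR_le (R : realType) (w a M x : R) : 0 < w -> 0 <= a -> 0 <= M ->
  6 * a <= w * M ^+ 2 -> - (w * expR x) + a * x <= a * M.
Proof.
move=> w_gt0 a_ge0 M_ge0 aM.
have [xM|Mx] := leP x M; first by have := expR_ge0 x; nra.
have x_gt0 : 0 < x by apply: le_lt_trans Mx.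
have cube_le : x ^+ 3 / 6 <= expR x.
  have := expR_ge1Dxn 2 (ltW x_gt0); rewrite !factS fact0 /=.
  have -> : (3 * (2 * (1 * 1)))%:R = 6 :> R by [].
  by apply: le_trans; rewrite lerDr.
have sqr_le : M ^+ 2 <= x ^+ 2 by rewrite ler_sqr ?nnegrE ?(ltW Mx) ?(ltW x_gt0).
have : a * x <= w * M ^+ 2 / 6 * x by rewrite ler_pM2r // ler_pdivlMr //; lra.
have : w * M ^+ 2 / 6 * x <= w * (x ^+ 3 / 6).
  have := ler_wpM2l (mulr_ge0 (ltW w_gt0) (ltW x_gt0)) sqr_le; lra.
have : w * (x ^+ 3 / 6) <= w * expR x by rewrite ler_pM2l.
have : 0 <= a * M by apply: mulr_ge0.
lra.
Qed.

Section ObjectiveBounds.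
Variables (R : realType) (d K : nat) (alpha : 'I_K -> 'rV[R]_d).

Lemma sum_expR_conic_le (omega : 'I_K -> R) (S : {set 'I_K}) (g : 'I_K -> R)
    (N M : R) (phi : 'rV[R]_d) :
  (forall k, 0 < omega k) -> (forall k, k \in S -> 0 <= g k) -> 0 <= N -> 0 <= M ->
  (forall k, k \in S -> 6 * (N * g k) <= omega k * M ^+ 2) ->
  - (\sum_k omega k * expR (dotv (alpha k) phi))
    + N * dotv (\sum_(k in S) g k *: alpha k) phi <= N * M * \sum_(k in S) g k.
Proof.
move=> omega_gt0 g_ge0 N_ge0 M_ge0 gM.
have sub_le : \sum_(k in S) omega k * expR (dotv (alpha k) phi) <=
    \sum_k omega k * expR (dotv (alpha k) phi).
  rewrite big_mkcond /=; apply: ler_sum => k _; case: ifP => // _.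
  by rewrite mulr_ge0 ?expR_ge0 ?ltW.
suff : - (\sum_(k in S) omega k * expR (dotv (alpha k) phi))
    + N * \sum_(k in S) g k * dotv (alpha k) phi <= N * M * \sum_(k in S) g k.
  by rewrite dotv_sumZl; lra.
rewrite -sumrN !mulr_sumr -big_split /=; apply: ler_sum => k kS.
have := linear_sub_expR_le (dotv (alpha k) phi) (omega_gt0 k)
  (mulr_ge0 N_ge0 (g_ge0 k kS)) M_ge0 (gM k kS).
lra.
Qed.

Variables (omega : 'I_K -> R) (eta : 'rV[R]_d) (S : {set 'I_K}) (g : 'I_K -> R).
Hypothesis omega_gt0 : forall k, 0 < omega k.
Hypothesis kkt : polar_kkt alpha [set: 'I_K] eta S g.
Let th := residual alpha eta S g.

Lemma fobj_residual_ge (N : R) (e : 'rV[R]_d) : 0 <= N ->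
  N ^+ 2 * (2^-1 * dotv th th + dotv (e - eta) th) - \sum_k omega k
  <= fobj alpha omega (N *: e) (N *: th).
Proof.
move=> N_ge0; have [_ _ act _] := kkt.
have eta_th : dotv eta th = dotv th th.
  rewrite -{1}(subrK th eta) dotvDl subr_residual dotv_sumZl big1 ?add0r //.
  by move=> k /act ->; rewrite mulr0.
have exp_le : \sum_k omega k * expR (dotv (alpha k) (N *: th)) <= \sum_k omega k.
  apply: ler_sum => k _; rewrite -[leRHS]mulr1 ler_pM2l // expR_le1 dotvZr.
  by apply: mulr_ge0_le0 => //; apply: (polar_kkt_le0 kkt); rewrite finset.in_setT.
rewrite /fobj !(dotvZl, dotvZr) dotvBl eta_th.
have : N ^+ 2 = N * N by rewrite expr2.
lra.
Qed.

Lemma fobj_scaled_le (N lam : R) (e phi : 'rV[R]_d) : 0 < N -> 0 <= lam ->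
  (forall k, k \in S -> 6 * g k <= omega k * lam ^+ 2 * N) ->
  fobj alpha omega (N *: e) (N *: phi) <=
  N ^+ 2 * (lam * \sum_(k in S) g k - 4^-1 * dotv (phi - th) (phi - th)
            + 2^-1 * dotv th th + dotv (e - eta) (e - eta) + dotv (e - eta) th).
Proof.
move=> N_gt0 lam_ge0 glam; have [_ g_ge0 _ _] := kkt.
have gM k : k \in S -> 6 * (N * g k) <= omega k * (lam * N) ^+ 2.
  by move=> kS; have := ler_wpM2l (ltW N_gt0) (glam k kS); rewrite !expr2; lra.
have := sum_expR_conic_le (N *: phi) omega_gt0 g_ge0 (ltW N_gt0)
  (mulr_ge0 lam_ge0 (ltW N_gt0)) gM.
rewrite -(subr_residual alpha eta) -/th.
have := mulr_ge0 (sqr_ge0 N) (dotvv_ge0 (2^-1 *: (phi - th) - (e - eta))).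
rewrite /fobj; move: (\sum_k _) (th) => X t.
rewrite !(dotvDl, dotvDr, dotvBl, dotvBr, dotvZl, dotvZr, dotvNl, dotvNr).
rewrite ?(dotvC eta e) ?(dotvC t e) ?(dotvC phi e) ?(dotvC t eta) ?(dotvC phi eta).
rewrite ?(dotvC phi t).
lra.
Qed.

Lemma fobj_argmax_bounds (N lam : R) (e theta : 'rV[R]_d) : 1 <= N -> 0 <= lam ->
  (forall k, k \in S -> 6 * g k <= omega k * lam ^+ 2 * N) ->
  (forall phi, fobj alpha omega (N *: e) phi <= fobj alpha omega (N *: e) theta) ->
  let err := (\sum_k omega k) / N + dotv (e - eta) (e - eta) + `|dotv (e - eta) th| in
  dotv (N^-1 *: theta - th) (N^-1 *: theta - th)
    <= 4 * (lam * \sum_(k in S) g k + err) /\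
  `|fobj alpha omega (N *: e) theta / N ^+ 2 - 2^-1 * dotv th th|
    <= lam * \sum_(k in S) g k + err.
Proof.
move=> N_ge1 lam_ge0 glam theta_max err.
have N_gt0 : 0 < N by lra.
have N2_gt0 : 0 < N ^+ 2 by rewrite exprn_gt0.
have thetaE : theta = N *: (N^-1 *: theta) by rewrite scalerA divff ?gt_eqF ?scale1r.
set F := fobj alpha omega (N *: e) theta.
have lower : 2^-1 * dotv th th + dotv (e - eta) th - (\sum_k omega k) / N ^+ 2 <= F / N ^+ 2.
  rewrite ler_pdivlMr // mulrBl divfK ?gt_eqF //.
  have := le_trans (fobj_residual_ge e (ltW N_gt0)) (theta_max (N *: th)); rewrite -/F; lra.
have upper : F / N ^+ 2 <= lam * \sum_(k in S) g k
    - 4^-1 * dotv (N^-1 *: theta - th) (N^-1 *: theta - th)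
    + 2^-1 * dotv th th + dotv (e - eta) (e - eta) + dotv (e - eta) th.
  rewrite ler_pdivrMr //.
  have := fobj_scaled_le e (N^-1 *: theta) N_gt0 lam_ge0 glam; rewrite -thetaE -/F; lra.
have W_ge0 : 0 <= \sum_k omega k by apply: sumr_ge0 => k _; apply: ltW.
have WN : (\sum_k omega k) / N ^+ 2 <= (\sum_k omega k) / N.
  rewrite expr2 invfM mulrA; apply: ler_piMr; first by rewrite divr_ge0 // ltW.
  by rewrite invf_le1.
have := dotvv_ge0 (N^-1 *: theta - th); have := dotvv_ge0 (e - eta).
have /andP [B_ge B_le] : - `|dotv (e - eta) th| <= dotv (e - eta) th <= `|dotv (e - eta) th|.
  by rewrite -ler_norml.
have lamG_ge0 : 0 <= lam * \sum_(k in S) g k.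
  by have [_ g_ge0 _ _] := kkt; apply: mulr_ge0 => //; apply: sumr_ge0 => k /g_ge0.
have WN_ge0 : 0 <= (\sum_k omega k) / N by apply: divr_ge0 => //; apply: ltW.
rewrite /err ler_norml; split; [|apply/andP; split]; lra.
Qed.

End ObjectiveBounds.

Local Open Scope classical_set_scope.
Local Open Scope ring_scope.

Section Limits.
Context {T : Type} {F : set_system T} {FF : Filter F} {R : realType}.

Lemma cvg0_le_slack (u v : T -> R) (c : R) : 0 <= c -> v @ F --> 0 ->
  (forall lam, 0 < lam -> \forall t \near F, `|u t| <= c * lam + v t) ->
  u @ F --> 0.
Proof.
move=> c_ge0 v_cvg0 u_le; apply/cvgr0Pnorm_le => e e_gt0.
have lam_gt0 : 0 < e / 2 / (c + 1) by rewrite !divr_gt0 //; lra.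
have c_lam : c * (e / 2 / (c + 1)) <= e / 2.
  rewrite mulrA ler_pdivrMr; lra.
near=> t.
have ut : `|u t| <= c * (e / 2 / (c + 1)) + v t by near: t; apply: u_le.
have vt : `|v t| <= e / 2 by near: t; apply: cvgr0_norm_le; rewrite // divr_gt0.
have := ler_norm (v t); lra.
Unshelve. all: by end_near.
Qed.

Lemma cvg_dotvv0 d (u : T -> 'rV[R]_d) :
  (fun t => dotv (u t) (u t)) @ F --> 0 -> u @ F --> (0 : 'rV[R]_d).
Proof.
move=> uu_cvg0; apply/(@cvgr0Pnorm_le _ _ _ F) => e e_gt0.
near=> t; rewrite -ler_sqr ?nnegrE ?normr_ge0 ?(ltW e_gt0) //.
apply: le_trans (sqr_norm_le_dotv _) (le_trans (ler_norm _) _).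
by near: t; apply: cvgr0_norm_le; rewrite ?exprn_gt0.
Unshelve. all: by end_near.
Qed.

Lemma dotv_cvg0 d (u v : T -> 'rV[R]_d) (l : 'rV[R]_d) :
  u @ F --> (0 : 'rV[R]_d) -> v @ F --> l -> (fun t => dotv (u t) (v t)) @ F --> 0.
Proof.
move=> u_cvg0 v_cvg; apply/norm_cvg0P.
have bound_cvg0 : (fun t => d%:R * (`|u t| * `|v t|)) @ F --> 0.
  have -> : 0 = d%:R * (`|0 : 'rV[R]_d| * `|l|) by rewrite normr0 mul0r mulr0.
  exact: cvgMl_tmp (cvgM (cvg_norm u_cvg0) (cvg_norm v_cvg)).
apply: (@squeeze_cvgr _ _ _ _ (cst 0) _ _ _ 0 (cvg_cst 0) bound_cvg0).
by near=> t; rewrite normr_ge0 norm_dotv_le.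
Unshelve. all: by end_near.
Qed.

End Limits.

Section Asymptotics.
Variables (R : realType) (d K : nat) (alpha : 'I_K -> 'rV[R]_d).
Variables (omega : 'I_K -> R) (etan theta : nat -> 'rV[R]_d) (eta : 'rV[R]_d).
Hypothesis omega_gt0 : forall k, 0 < omega k.
Hypothesis etan_cvg : (fun n => n%:R^-1 *: etan n) @ \oo --> eta.
Hypothesis theta_max :
  forall n th, fobj alpha omega (etan n) th <= fobj alpha omega (etan n) (theta n).

Let S := (canproj_cert alpha eta).1.
Let g := (canproj_cert alpha eta).2.
Let G := \sum_(k in S) g k.
Let cp := canproj alpha eta.
Let delta n := n%:R^-1 *: etan n - eta.
Let err n := (\sum_k omega k) / n%:R + dotv (delta n) (delta n) + `|dotv (delta n) cp|.

Lemma sum_multipliers_ge0 : 0 <= G.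
Proof. by have [_ g_ge0 _ _] := canproj_certP alpha eta; apply: sumr_ge0 => k /g_ge0. Qed.

Lemma err_cvg0 : err @ \oo --> 0.
Proof.
have delta_cvg0 : delta @ \oo --> (0 : 'rV[R]_d) by apply/subr_cvg0.
have inv_cvg0 : (fun n => n%:R^-1 : R) @ \oo --> 0.
  apply/gtr0_cvgV0; last exact: cvgr_idn.
  by near=> n; rewrite ltr0n; near: n; apply: nbhs_infty_gt.
have -> : 0 = (\sum_k omega k) * 0 + 0 + 0 :> R by rewrite mulr0 !addr0.
apply: cvgD; first apply: cvgD.
- exact: cvgMl_tmp inv_cvg0.
- exact: (dotv_cvg0 delta_cvg0 delta_cvg0).
- exact/norm_cvg0P/(dotv_cvg0 delta_cvg0 (cvg_cst cp)).
Unshelve. all: by end_near.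
Qed.

Lemma fobj_argmax_near lam : 0 < lam -> \forall n \near \oo,
  dotv (n%:R^-1 *: theta n - cp) (n%:R^-1 *: theta n - cp) <= 4 * (lam * G + err n) /\
  `|fobj alpha omega (etan n) (theta n) / n%:R ^+ 2 - 2^-1 * dotv cp cp|
    <= lam * G + err n.
Proof.
move=> lam_gt0.
have large k : \forall n \near \oo,
    6 * g k <= omega k * lam ^+ 2 * n%:R.
  have wl_gt0 : 0 < omega k * lam ^+ 2 by rewrite mulr_gt0 ?exprn_gt0.
  apply: filterS (nbhs_infty_ger (6 * g k / (omega k * lam ^+ 2))).
  by move=> n; rewrite ler_pdivrMr // [n%:R * _]mulrC.
near=> n.
have n_ge1 : 1 <= n%:R :> R by near: n; apply: nbhs_infty_ger.
have etanE : etan n = n%:R *: (n%:R^-1 *: etan n).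
  by rewrite scalerA divff ?scale1r // gt_eqF // (lt_le_trans ltr01 n_ge1).
have glam : forall k, 6 * g k <= omega k * lam ^+ 2 * n%:R.
  by near: n; apply: filter_forall.
have := theta_max n; rewrite etanE => max.
have := fobj_argmax_bounds omega_gt0 (canproj_certP alpha eta) n_ge1 (ltW lam_gt0)
  (fun k _ => glam k) max.
by move=> /= [h1 h2]; split.
Unshelve. all: by end_near.
Qed.

Lemma argmax_scaled_cvg : (fun n => n%:R^-1 *: theta n) @ \oo --> cp.
Proof.
apply/subr_cvg0/cvg_dotvv0.
apply: (@cvg0_le_slack _ _ _ _ _ (fun n => 4 * err n) (4 * G)).
- by rewrite mulr_ge0 ?sum_multipliers_ge0.
- by rewrite -(mulr0 4); apply: cvgMl_tmp err_cvg0.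
move=> lam lam_gt0; apply: filterS (fobj_argmax_near lam_gt0) => n [sq _].
by rewrite ger0_norm ?dotvv_ge0 //; lra.
Qed.

Lemma argmax_value_cvg :
  (fun n => fobj alpha omega (etan n) (theta n) / n%:R ^+ 2) @ \oo --> 2^-1 * dotv cp cp.
Proof.
apply/subr_cvg0/(@cvg0_le_slack _ _ _ _ _ err G sum_multipliers_ge0 err_cvg0) => lam lam_gt0.
by apply: filterS (fobj_argmax_near lam_gt0) => n [_ val]; rewrite [G * _]mulrC.
Qed.

End Asymptotics.

Theorem proposition4 (R : realType) (d K : nat) (alpha : 'I_K -> 'rV[R]_d)
    (alpha_neq0 : forall k, alpha k != 0) :
  exists cp : 'rV[R]_d -> 'rV[R]_d,
    (forall eta : 'rV[R]_d, eta != 0 -> exists S : {set 'I_K}, admissible alpha eta S)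
    /\ (forall (eta : 'rV[R]_d) (S : {set 'I_K}), eta != 0 ->
          admissible alpha eta S -> perpproj alpha S eta = cp eta)
    /\ (forall eta : 'rV[R]_d, eta != 0 -> {for eta, continuous cp})
    /\ (forall (omega : 'I_K -> R) (etan : nat -> 'rV[R]_d) (eta : 'rV[R]_d)
               (theta : nat -> 'rV[R]_d),
          (forall k, 0 < omega k) ->
          eta != 0 ->
          (fun n => n%:R^-1 *: etan n) @ \oo --> eta ->
          (forall n (th : 'rV[R]_d),
              fobj alpha omega (etan n) th <= fobj alpha omega (etan n) (theta n)) ->
          ((fun n => n%:R^-1 *: theta n) @ \oo --> cp eta)
          /\ ((fun n => fobj alpha omega (etan n) (theta n) / (n%:R ^+ 2))
                @ \oo --> 2^-1 * dotv (cp eta) (cp eta))).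
Proof.
exists (canproj alpha); split; [|split; [|split]].
- move=> eta _; exists (canproj_cert alpha eta).1.
  exact: polar_kkt_admissible (canproj_certP alpha eta).
- by move=> eta S _; apply: admissible_perpproj.
- by move=> eta _; apply: canproj_continuous.
move=> omega etan eta theta omega_gt0 _ etan_cvg theta_max.
split; [exact: argmax_scaled_cvg omega_gt0 etan_cvg theta_max|].
exact: argmax_value_cvg omega_gt0 etan_cvg theta_max.
Qed.
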